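(* Let $(X,d_X)$ be a metric space with density character $\kappa$. Suppose there are $C\in[1,\infty)$ and $D\in[0,\infty)$ such that $\Delta_X^{(c)}(R)\leq CR+D$ for all $R\in[0,\infty)$. Then for any $\lambda>0$, any $K>2(C+\lambda)$, and any $L>\frac{(C+\lambda)D}{\lambda}$, there exists a coarse Lipschitz embedding $f\colon X\to c_0^+(\kappa)$ such that \[d_X(x,y)-L\leq \|f(x)-f(y)\|_{\infty}\leq K\,d_X(x,y)\] for every $x,y\in X$. If $D=0$, then it is possible to take $L=0$.
   Context: The density character $\mathrm{dens}(X)$ is the smallest cardinality of a dense subset of $X$. For a cardinal $\kappa$, $c_0(\kappa)$ is the space of real families $(x_\xi)_{\xi<\kappa}$ such that $\{\xi : |x_\xi|>\eta\}$ is finite for every $\eta>0$, with the sup norm, and $c_0^+(\kappa)=\{x\in c_0(\kappa): x_\xi\geq 0 \text{ for all }\xi\}$ with the metric inherited from $c_0(\kappa)$. For a family $\mathcal{U}$ of subsets covering $X$: $\mathrm{diam}(\mathcal{U})=\sup\{\mathrm{diam}(U): U\in\mathcal{U}\}$; the Lebesgue number is $\mathcal{L}(\mathcal{U})=\sup\{d\in[0,\infty): \text{every } E\subseteq X \text{ with } \mathrm{diam}(E)<d \text{ is contained in some } U\in\mathcal{U}\}$; $\mathcal{U}$ is point-finite if each $x\in X$ lies in only finitely many $U\in\mathcal{U}$. Define $\Delta_X^{(c)}\colon[0,\infty)\to[0,\infty]$ by $\Delta_X^{(c)}(R)=\inf\{\mathrm{diam}(\mathcal{U}): \mathcal{U}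 \text{ a point-finite cover of } X \text{ with } \mathcal{L}(\mathcal{U})\geq R\}$. For $f\colon X\to Y$ between metric spaces, $\omega_f(t)=\sup\{d_Y(f(x_1),f(x_2)): d_X(x_1,x_2)\leq t\}$ and $\rho_f(t)=\inf\{d_Y(f(x_1),f(x_2)): d_X(x_1,x_2)\geq t\}$; $f$ is a coarse Lipschitz embedding if there exist $A\geq 1$, $B\geq 0$ with $\omega_f(t)\leq At+B$ and $\rho_f(t)\geq \frac1A t-B$ for all $t\geq 0$. *)

From HB Require Import structures.
From mathcomp Require Import all_boot all_order all_algebra.
From mathcomp Require Import all_classical all_reals all_analysis.
Set Implicit Arguments. Unset Strict Implicit. Unset Printing Implicit Defensive.
Import Order.TTheory GRing.Theory Num.Theory.
Local Open Scope classical_set_scope.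
Local Open Scope ring_scope.
Local Open Scope ereal_scope.

Section Defs.
Variables (R : realType) (X : Type) (d : X -> X -> R).

Definition is_metric : Prop :=
  (forall x y, (0 <= d x y)%R) /\
  (forall x y, d x y = 0%R <-> x = y) /\
  (forall x y, d x y = d y x) /\
  (forall x y z, (d x z <= d x y + d y z)%R).

Definition dense_in (S : set X) : Prop :=
  forall x (e : R), (0 < e)%R -> exists2 s, S s & (d x s < e)%R.

(* the type I has cardinality dens(X) : it is equinumerous with some dense
   subset, and injects into every dense subset *)
Definition has_density_character (I : Type) : Prop :=
  (exists S : set X, dense_in S /\ ([set: I] #= S)%card) /\
  (forall S : set X, dense_in S -> ([set: I] #<= S)%card).

(* diameter, in [0, +oo]; diam set0 = 0 *)
Definition diam (A : set X) : \bar R :=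
  ereal_sup ([set 0] `|` [set (d x y)%:E | x in A & y in A]).

Definition is_cover (U : set (set X)) : Prop := \bigcup_(A in U) A = setT.

Definition point_finite (U : set (set X)) : Prop :=
  forall x, finite_set [set A | U A /\ A x].

Definition diam_family (U : set (set X)) : \bar R :=
  ereal_sup ([set 0] `|` [set diam A | A in U]).

Definition lebesgue_number (U : set (set X)) : \bar R :=
  ereal_sup [set r%:E | r in [set r : R | (0 <= r)%R /\
     (forall E : set X, diam E < r%:E -> exists2 A, U A & E `<=` A)]].

Definition Delta_c (r : R) : \bar R :=
  ereal_inf [set diam_family U | U in
    [set U | is_cover U /\ point_finite U /\ r%:E <= lebesgue_number U]].
End Defs.

Section C0.
Variables (R : realType) (I : Type).

Definition c0plus (x : I -> R) : Prop :=
  (forall i, (0 <= x i)%R) /\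
  (forall eta : R, (0 < eta)%R -> finite_set [set i | (eta < `|x i|)%R]).

Definition supnorm (x : I -> R) : \bar R :=
  ereal_sup ([set 0] `|` [set (`|x i|)%:E | i in [set: I]]).
End C0.

Section Coarse.
Variables (R : realType) (X I : Type) (d : X -> X -> R) (f : X -> I -> R).

Definition dist_f (x1 x2 : X) : \bar R := supnorm (f x1 - f x2)%R.

Definition omega_f (t : R) : \bar R :=
  ereal_sup [set dist_f p.1 p.2 | p in [set p : X * X | (d p.1 p.2 <= t)%R]].

Definition rho_f (t : R) : \bar R :=
  ereal_inf [set dist_f p.1 p.2 | p in [set p : X * X | (t <= d p.1 p.2)%R]].

Definition coarse_lipschitz_embedding : Prop :=
  exists A B : R, (1 <= A)%R /\ (0 <= B)%R /\
    forall t : R, (0 <= t)%R ->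
      omega_f t <= (A * t + B)%:E /\ ((t / A - B)%:E <= rho_f t).
End Coarse.

(* For every scale R_n = ratio ^ n (n : int) the bound on Delta_c provides
   a point-finite cover U_n of Lebesgue number above R_n whose members have
   diameter below (C + mu/2) R_n + D, where K = 2 (C + mu).  To A in U_n we attach the
   K-Lipschitz bump  K min(min(R_n/2, d(., X \ A)), (d(., x0) - eps R_n)^+).
   If d(x,y) > L and d(x,x0) <= d(y,x0), take R_n close to (d(x,y) - L)/(C + mu):
   a member A of U_n containing the ball B(y, R_n/2) is too small to contain x,
   so its bump vanishes at x and equals (C + mu) R_n >= d(x,y) - L at y.
   Every such A meets a dense set S of cardinality dens(X), and |S x N| = |S|
   when S is infinite, so the bumps can be indexed injectively by dens(X); at a
   given point only finitely many bumps exceed a given eta > 0, hence the map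
   takes values in c_0^+.  When S is finite, the Frechet embedding
   x |-> (d(x,s))_(s in S) is already isometric. *)

From HB Require Import structures.
From mathcomp Require Import all_boot all_order all_algebra.
From mathcomp Require Import all_classical all_reals all_analysis.
From mathcomp Require Import lra ring zify.
Import Order.TTheory GRing.Theory Num.Theory.
Set Implicit Arguments. Unset Strict Implicit.
Local Open Scope classical_set_scope.
Local Open Scope ring_scope.
Local Open Scope card_scope.

(** * Cardinal arithmetic *)

Lemma card_le_of_inj T U (A : set T) (B : set U) (f : T -> U) :
  set_fun A B f -> set_inj A f -> A #<= B.
Proof.
move=> fS fI; have [g] : $|{injfun A >-> B}| by apply/injfunPex; exists f.
exact: inj_card_le.
Qed.

Lemma card_eq_surj T U (B : set U) : B !=set0 -> [set: T] #= B ->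
  exists f : T -> U, range f = B.
Proof.
elim/Ppointed: U => U in B *; first by rewrite emptyE => /set0P; rewrite eqxx.
move=> _ /pcard_eqP /bijPex[f [fS _ fsurj]].
by exists f; apply/seteqP; split=> [_ [t _ <-]|//]; apply: fS.
Qed.

Lemma card_setXnat_le_cofinite T (A B : set T) : B !=set0 ->
  finite_set (A `\` B) -> A `*` [set: nat] #<= B `*` [set: nat].
Proof.
move=> [b0 Bb0] /finite_set_countable /countable_injP[e einj].
pose f (p : T * nat) := if p.1 \in B then (p.1, (2 * p.2)%N)
  else (b0, (2 * pickle (e p.1, p.2)).+1).
apply: (@card_le_of_inj _ _ _ _ f).
  by move=> [a n] _; rewrite /f /=; case: ifPn; rewrite ?inE.
move=> [a n] [a' n'] /set_mem[/= Aa _] /set_mem[/= Aa' _]; rewrite /f /=.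
have AB a1 : a1 \notin B -> A a1 -> a1 \in A `\` B.
  by move=> /negP nB Aa1; apply/mem_set; split=> // /mem_set.
case: ifPn => Ba; case: ifPn => Ba' [].
- by move=> -> /eqP; rewrite eqn_mul2l => /eqP ->.
- by move=> _ /(congr1 odd); rewrite oddS !mul2n !odd_double.
- by move=> _ /(congr1 odd); rewrite oddS !mul2n !odd_double.
- move=> /eqP; rewrite eqn_mul2l => /eqP /(pcan_inj pickleK) [ea ->].
  by rewrite (einj a a') ?AB.
Qed.

Section InfiniteSetXnat.
Variables (T : pointedType) (A : set T).

(* [G] is the graph of an injection from [nat_graph_dom G * nat] to
   [nat_graph_dom G], a subset of [A]. *)
Definition nat_graph (G : set (T * nat * T)) : Prop := [/\
  forall a n y, G (a, n, y) -> A a,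
  forall p y y', G (p, y) -> G (p, y') -> y = y',
  forall p q y, G (p, y) -> G (q, y) -> p = q,
  forall a n y m, G (a, n, y) -> exists y', G (a, m, y') &
  forall p y, G (p, y) -> exists m z, G (y, m, z)].

Definition nat_graph_dom (G : set (T * nat * T)) := [set a | exists n y, G (a, n, y)].

Lemma nat_graph_bigcup (F : set (set (T * nat * T))) :
  F `<=` nat_graph -> total_on F subset -> nat_graph (\bigcup_(G in F) G).
Proof.
move=> FP Ftot; split.
- by move=> a n y [G /FP[G1 _ _ _ _] /G1].
- move=> p y y' [G FG Gy] [G' FG' Gy'].
  have [GG'|G'G] := Ftot G G' FG FG'.
  + by have [_ G2 _ _ _] := FP G' FG'; apply: G2 (GG' _ Gy) Gy'.
  + by have [_ G2 _ _ _] := FP G FG; apply: G2 Gy (G'G _ Gy').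
- move=> p q y [G FG Gy] [G' FG' Gy'].
  have [GG'|G'G] := Ftot G G' FG FG'.
  + by have [_ _ G3 _ _] := FP G' FG'; apply: G3 (GG' _ Gy) Gy'.
  + by have [_ _ G3 _ _] := FP G FG; apply: G3 Gy (G'G _ Gy').
- move=> a n y m [G FG Gy]; have [_ _ _ G4 _] := FP G FG.
  by have [y' Gy'] := G4 _ _ _ m Gy; exists y', G.
- move=> p y [G FG Gy]; have [_ _ _ _ G5] := FP G FG.
  by have [m [z Gz]] := G5 _ _ Gy; exists m, z, G.
Qed.

Lemma nat_graph_extend G (h : nat -> T) : nat_graph G ->
  set_fun setT (A `\` nat_graph_dom G) h -> injective h ->
  nat_graph (G `|` [set q | exists k n, q = (h k, n, h (pickle (k, n)))]).
Proof.
move=> [G1 G2 G3 G4 G5] hS hinj.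
have hA k : A (h k) by have [] := hS k I.
have hD k : ~ nat_graph_dom G (h k) by have [] := hS k I.
have pickle_inj : injective (@pickle (nat * nat)%type) := pcan_inj pickleK.
split.
- by move=> a n y [/G1//|[k [n' [-> _ _]]]].
- move=> p y y' [Gy|[k [n [-> ->]]]] [Gy'|[k' [n' [ep ->]]]].
  + exact: G2 Gy Gy'.
  + by case: (hD k'); rewrite ep in Gy; exists n', y.
  + by case: (hD k); exists n, y'.
  + by case: ep => /hinj -> ->.
- move=> p q y [Gy|[k [n [-> ->]]]] [Gy'|[k' [n' [-> ey]]]].
  + exact: G3 Gy Gy'.
  + have [m [z Gz]] := G5 _ _ Gy.
    by case: (hD (pickle (k', n'))); rewrite -ey; exists m, z.
  + by have [m [z Gz]] := G5 _ _ Gy'; case: (hD (pickle (k, n))); exists m, z.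
  + by move: ey => /hinj /pickle_inj [-> ->].
- move=> a n y m [Gy|[k [n' [[-> _] _]]]].
  + by have [y' Gy'] := G4 _ _ _ m Gy; exists y'; left.
  + by exists (h (pickle (k, m))); right; exists k, m.
- move=> p y [Gy|[k [n [_ ->]]]].
  + by have [m [z Gz]] := G5 _ _ Gy; exists m, z; left.
  + exists 0%N, (h (pickle (pickle (k, n), 0%N))); right.
    by exists (pickle (k, n)), 0%N.
Qed.

Lemma nat_graph_card G : nat_graph G -> nat_graph_dom G `*` [set: nat] #<= A.
Proof.
move=> [G1 _ G3 G4 G5]; pose f p := get [set y | G (p, y)].
have Gf p : nat_graph_dom G p.1 -> G (p, f p).
  by case: p => a n /= [m [y /(G4 _ _ _ n) Gy]]; exact: getPex Gy.
apply: (@card_le_of_inj _ _ _ _ f).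
  by move=> p [/Gf + _] => /G5[m [z /G1]].
move=> p q /set_mem[/Gf Gp _] /set_mem[/Gf Gq _] fpq.
by apply: G3 Gp _; rewrite fpq.
Qed.

(* A maximal [nat_graph] leaves only finitely many points of [A] outside its
   domain: countably many of them would extend it. *)
Lemma infinite_card_setXnat_pointed : infinite_set A -> A `*` [set: nat] #<= A.
Proof.
move=> Ainf; have [G [PG Gmax]] := Zorn_bigcup nat_graph_bigcup.
have DGfin : finite_set (A `\` nat_graph_dom G).
  apply: contrapT => /infiniteP /pcard_leP /injfunPex[h hS hinj].
  have {}hinj : injective h by move=> k k'; apply: hinj; apply: mem_set.
  have hD k : ~ nat_graph_dom G (h k) by have [] := hS k I.
  apply: Gmax (nat_graph_extend PG hS hinj); split; first by move=> q Gq; left.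
  move=> /(_ (h 0%N, 0%N, h (pickle (0%N, 0%N)))) G0.
  apply: (hD 0%N); exists 0%N, (h (pickle (0%N, 0%N))).
  by apply: G0; right; exists 0%N, 0%N.
have DG0 : nat_graph_dom G !=set0.
  by apply/set0P/negP => /eqP DG0; apply: Ainf; move: DGfin; rewrite DG0 setD0.
apply: card_le_trans (card_setXnat_le_cofinite DG0 DGfin) _.
exact: nat_graph_card.
Qed.
End InfiniteSetXnat.

Lemma infinite_card_setXnat T (A : set T) : infinite_set A -> A `*` [set: nat] #<= A.
Proof.
elim/Ppointed: T => T in A *; last exact: infinite_card_setXnat_pointed.
by rewrite emptyE => /(_ (finite_set0 T)).
Qed.

(* [(n, A)] is coded by a point [s] of [A `&` S] and by the rank of [A] among
   the finitely many members of [U n] containing [s]. *)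
Lemma point_finite_index (X I : Type) (S : set X) (U : int -> set (set X)) :
  (forall n, point_finite (U n)) -> infinite_set S -> S #<= [set: I] ->
  exists iota : int * set X -> I,
    {in [set j | U j.1 j.2 /\ j.2 `&` S !=set0] &, injective iota}.
Proof.
elim/Ppointed: I => I Ufin Sinf SI.
  by move: SI; rewrite emptyE => /eqP S0; case: Sinf; rewrite S0; exact: finite_set0.
apply/pcard_injP; apply: card_le_trans SI.
apply: card_le_trans (infinite_card_setXnat Sinf).
have /choice[k kinj] : forall p : int * X, exists k : set X -> nat,
    {in [set A | U p.1 A /\ A p.2] &, injective k}.
  by move=> [n s]; apply/countable_injP/finite_set_countable/Ufin.
have [s0 _] := infinite_setN0 Sinf.
have /choice[s sP] : forall j : int * set X, exists s,
    U j.1 j.2 /\ j.2 `&` S !=set0 -> S s /\ j.2 s.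
  move=> j; have [[_ [s [As Ss]]]|nJ] := pselect (U j.1 j.2 /\ j.2 `&` S !=set0).
    by exists s.
  by exists s0 => /nJ.
apply: (@card_le_of_inj _ _ _ _ (fun j => (s j, pickle (j.1, k (j.1, s j) j.2)))).
  by move=> j /sP[]; split.
move=> [n A] [n' A'] /set_mem /[dup] [[UA _]] /sP[_ As].
move=> /set_mem /[dup] [[UA' _]] /sP[_ As'].
case=> /= es /(pcan_inj pickleK) [en]; subst n'; rewrite -es in As' * => ek.
by congr pair; apply: (kinj (n, s (n, A))) ek; apply: mem_set.
Qed.

Lemma le_minD (R : realDomainType) (a b u v e : R) :
  a <= b + e -> u <= v + e -> Num.min a u <= Num.min b v + e.
Proof. by case: (leP a u) => ?; case: (leP b v) => ?; lra. Qed.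

Lemma le_max0D (R : realDomainType) (u v e : R) :
  0 <= e -> u <= v + e -> Num.max 0 u <= Num.max 0 v + e.
Proof. by case: (leP 0 u) => ?; case: (leP 0 v) => ?; lra. Qed.

Lemma finite_int_window (R : realType) (lo hi : R) :
  finite_set [set n : int | lo <= n%:~R <= hi].
Proof.
pose N := `|Num.ceil (`|lo| + `|hi|)|%N.
have N_ge n : lo <= n%:~R <= hi -> (`|n| <= N%:Z)%R.
  move=> /andP[lon nhi]; rewrite /N gez0_abs; last first.
    by rewrite ceil_ge0; have := normr_ge0 lo; have := normr_ge0 hi; lra.
  rewrite -(ler_int R); apply: le_trans (ceil_ge _).
  rewrite intr_norm ler_norml; have := ler_norm hi; have := ler_norm (- lo).
  have := normr_ge0 lo; have := normr_ge0 hi.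
  by rewrite normrN => *; apply/andP; split; lra.
apply: sub_finite_set (finite_image (fun k : nat => k%:Z - N%:Z) (finite_II (N + N).+1)).
move=> n /N_ge nN; exists (absz (n + N%:Z)); last by rewrite gez0_abs; [ring | lia].
by rewrite /=; lia.
Qed.

(** * Sup norm and metric spaces *)

Section Supnorm.
Variables (R : realType) (I : Type).
Implicit Types (u v : I -> R).

Lemma supnorm_ge0 u : (0 <= supnorm u)%E.
Proof. by apply: ereal_sup_ubound; left. Qed.

Lemma le_supnorm u i : ((`|u i|)%:E <= supnorm u)%E.
Proof. by apply: ereal_sup_ubound; right; exists i. Qed.

Lemma supnorm_le u M : 0 <= M -> (forall i, `|u i| <= M) -> (supnorm u <= M%:E)%E.
Proof. by move=> M0 uM; apply: ge_ereal_sup => _ [->|[i _ <-]]; rewrite lee_fin. Qed.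

Lemma supnormB u v : supnorm (u - v) = supnorm (v - u).
Proof.
rewrite /supnorm; congr ereal_sup; apply/seteqP; split=> _ [->|[i _ <-]];
  by [left | right; exists i => //=; rewrite distrC].
Qed.
End Supnorm.

Lemma coarse_lipschitz_embedding_of_bounds (R : realType) (X I : Type)
    (d : X -> X -> R) (f : X -> I -> R) (K L : R) : 1 <= K -> 0 <= L ->
  (forall x y, ((d x y - L)%:E <= supnorm (f x - f y)%R)%E /\
               (supnorm (f x - f y)%R <= (K * d x y)%:E)%E) ->
  coarse_lipschitz_embedding d f.
Proof.
move=> K1 L0 fb; exists K, L; split=> //; split=> // t t0; split.
  apply: ge_ereal_sup => _ [[x y] /= dxy <-]; apply: le_trans (fb x y).2 _.
  rewrite lee_fin; apply: le_trans (ler_wpDr L0 (lexx _)).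
  by apply: ler_wpM2l => //; lra.
apply: le_ereal_inf_tmp => _ [[x y] /= dxy <-]; apply: le_trans (fb x y).1.
by rewrite lee_fin lerD2r; apply: le_trans dxy; rewrite ler_pdivrMr ?ler_peMr //; lra.
Qed.

Section MetricSpace.
Variables (R : realType) (X : Type) (d : X -> X -> R).
Hypothesis d_metric : is_metric d.

Lemma d_ge0 x y : 0 <= d x y. Proof. by case: d_metric. Qed.
Lemma dxx x : d x x = 0. Proof. by case: d_metric => _ [dP _]; apply/dP. Qed.
Lemma d_sym x y : d x y = d y x. Proof. by case: d_metric => _ [_ []]. Qed.
Lemma d_triangle x y z : d x z <= d x y + d y z.
Proof. by case: d_metric => _ [_ [_]]. Qed.

Lemma ler_dist_d x y z : `|d x z - d y z| <= d x y.
Proof.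
rewrite ler_norml; have := d_triangle x y z; have := d_triangle y x z.
by rewrite (d_sym y x) => *; apply/andP; split; lra.
Qed.

Lemma diam_ge (A : set X) x y : A x -> A y -> ((d x y)%:E <= diam d A)%E.
Proof. by move=> Ax Ay; apply: ereal_sup_ubound; right; exists x => //; exists y. Qed.

Lemma diam_closed_ball y r : 0 <= r ->
  (diam d [set z | (d y z <= r)%R] <= (2 * r)%:E)%E.
Proof.
move=> r0; apply: ge_ereal_sup => _ [->|[a /= ya [b /= yb <-]]]; rewrite lee_fin.
  by rewrite mulr_ge0.
by have := d_triangle a y b; rewrite (d_sym a y); lra.
Qed.

Lemma diam_le_diam_family (U : set (set X)) A : U A -> (diam d A <= diam_family d U)%E.
Proof. by move=> UA; apply: ereal_sup_ubound; right; exists A. Qed.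

Lemma lebesgue_number_sub (U : set (set X)) r (E : set X) :
  (r%:E <= lebesgue_number d U)%E -> (diam d E < r%:E)%E -> exists2 A, U A & E `<=` A.
Proof.
move=> rU Er; have /ereal_sup_gt[_ [s [_ sU] <-]] := lt_le_trans Er rU.
by move=> /sU.
Qed.

Lemma Delta_c_lt r s : (Delta_c d r < s)%E -> exists U : set (set X),
  [/\ point_finite U, (r%:E <= lebesgue_number d U)%E & (diam_family d U < s)%E].
Proof. by move=> /ereal_inf_lt[_ [U [_ [pfU rU]] <-] Us]; exists U. Qed.

Definition trunc_compl_dist (r : R) (A : set X) (x : X) : R :=
  inf ([set r] `|` [set d x z | z in ~` A]).

Section TruncComplDist.
Variables (r : R) (A : set X).
Hypothesis r_ge0 : 0 <= r.
Local Notation h := (trunc_compl_dist r A).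

Let h_set_lb x : has_lbound ([set r] `|` [set d x z | z in ~` A]).
Proof. by exists 0 => _ [->|[z _ <-]] //; exact: d_ge0. Qed.

Let h_set_n0 x : ([set r] `|` [set d x z | z in ~` A]) !=set0.
Proof. by exists r; left. Qed.

Lemma trunc_compl_dist_ge0 x : 0 <= h x.
Proof. by apply: lb_le_inf => // _ [->|[z _ <-]] //; exact: d_ge0. Qed.

Lemma trunc_compl_dist_le x : h x <= r.
Proof. by apply: ge_inf => //; left. Qed.

Lemma trunc_compl_dist_out x : ~ A x -> h x = 0.
Proof.
move=> Ax; apply/eqP; rewrite eq_le trunc_compl_dist_ge0 andbT -(dxx x).
by apply: ge_inf => //; right; exists x.
Qed.

Lemma trunc_compl_dist_gt0 x : 0 < h x -> A x.
Proof.
by move=> hx; apply: contrapT => /trunc_compl_dist_out hx0; rewrite hx0 ltxx in hx.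
Qed.

Lemma trunc_compl_dist_lipschitz x y : h x <= h y + d x y.
Proof.
rewrite -lerBlDr; apply: lb_le_inf => // _ [->|[z Az <-]]; rewrite lerBlDr.
  by apply: ler_wpDr; [exact: d_ge0 | exact: trunc_compl_dist_le].
apply: (@le_trans _ _ (d x z)); first by apply: ge_inf => //; right; exists z.
by rewrite addrC d_triangle.
Qed.

Lemma trunc_compl_dist_ball y : [set z | d y z <= r] `<=` A -> h y = r.
Proof.
move=> yA; apply/eqP; rewrite eq_le trunc_compl_dist_le /=.
apply: lb_le_inf => // _ [->|[z Az <-]] //; rewrite leNgt; apply/negP.
by move=> /ltW /yA.
Qed.
End TruncComplDist.

Lemma finite_frechet_embedding (I : Type) (phi : I -> X) :
  finite_set [set: I] -> dense_in d (range phi) ->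
  exists f : X -> I -> R, (forall x, c0plus (f x)) /\
    forall x y, supnorm (f x - f y) = (d x y)%:E.
Proof.
move=> Ifin phi_dense; exists (fun x i => d x (phi i)); split.
  by move=> x; split=> [i|eta _]; [exact: d_ge0 | exact: sub_finite_set Ifin].
move=> x y; apply/eqP; rewrite eq_le; apply/andP; split.
  by apply: supnorm_le => [|i]; [exact: d_ge0 | exact: ler_dist_d].
apply/lee_subgt0Pr => e e0; have e2 : 0 < e / 2 by lra.
have [_ [i _ <-] yi] := phi_dense y (e / 2) e2.
apply: le_trans (le_supnorm _ i); rewrite -EFinB lee_fin; apply: le_trans (ler_norm _).
by have := d_triangle x (phi i) y; rewrite (d_sym (phi i)) !fctE; lra.
Qed.
End MetricSpace.

(** * The embedding *)

(* With K = 2 (C + mu), the bump of a set containing a ball of radius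
   [scale n / 2] has height (C + mu) [scale n], while the members of the n-th
   cover have diameter below (C + mu / 2) [scale n] + D.  Consecutive scales
   differ by the factor [ratio] = (C + mu) / (C + mu / 2), so some scale
   satisfies both (C + mu) [scale n] >= d x y - L and
   (C + mu / 2) [scale n] <= d x y - L. *)
Section Scales.
Variables (R : realType) (C K : R).
Hypotheses (C_ge1 : 1 <= C) (K_gt : 2 * C < K).

Definition mu := K / 2 - C.
Definition slack := mu / (2 * (C + 1)).
Definition eps := mu / 4.
Definition ratio := (C + mu) / (C + mu / 2).
Definition scale (n : int) := expR (n%:~R * ln ratio).

Lemma mu_gt0 : 0 < mu.
Proof. by rewrite /mu subr_gt0 ltr_pdivlMr //; move: K_gt; lra. Qed.

Lemma slack_gt0 : 0 < slack.
Proof. by rewrite divr_gt0 ?mu_gt0 //; move: C_ge1; lra. Qed.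

Lemma ratio_gt1 : 1 < ratio.
Proof. by have mu0 := mu_gt0; have C1 := C_ge1; rewrite /ratio ltr_pdivlMr; lra. Qed.

Lemma ln_ratio_gt0 : 0 < ln ratio. Proof. exact: ln_gt0 ratio_gt1. Qed.
Lemma scale_gt0 n : 0 < scale n. Proof. exact: expR_gt0. Qed.
Lemma ln_scale n : ln (scale n) = n%:~R * ln ratio. Proof. exact: expRK. Qed.

Lemma slack_lt r : 0 < r -> C * ((1 + slack) * r) < (C + mu / 2) * r.
Proof.
move=> r0; have C1 := C_ge1.
have -> : mu / 2 = slack * (C + 1) by rewrite /slack; field; apply/eqP; lra.
rewrite mulrA ltr_pM2r // mulrDr mulr1 ltrD2l mulrC ltr_pM2l ?slack_gt0 //; lra.
Qed.

Lemma scale_window a : 0 < a -> exists n, a <= scale n <= ratio * a.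
Proof.
move=> a0; have rho0 := ln_ratio_gt0.
have ea : expR (ln a) = a by apply: lnK; rewrite posrE.
have er : expR (ln ratio) = ratio by apply: lnK; rewrite posrE; have := ratio_gt1; lra.
exists (Num.ceil (ln a / ln ratio)); rewrite /scale.
rewrite -{1}ea ler_expR -ler_pdivrMr // ceil_ge /=.
have := ceilB1_lt (ln a / ln ratio); rewrite ltr_pdivlMr // intrD mulrBl mul1r => h.
have -> : ratio * a = expR (ln ratio + ln a) by rewrite expRD er ea.
by rewrite ler_expR; lra.
Qed.

Lemma finite_scale_window a b : 0 < a -> finite_set [set n | a < scale n < b].
Proof.
move=> a0; have rho0 := ln_ratio_gt0.
apply: sub_finite_set (finite_int_window (ln a / ln ratio) (ln b / ln ratio)).
move=> n /andP[an nb]; have b0 := lt_trans (scale_gt0 n) nb.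
rewrite /= ler_pdivrMr // ler_pdivlMr // -ln_scale.
by rewrite !ler_ln ?posrE ?scale_gt0 ?ltW.
Qed.
End Scales.

Section Embedding.
Variables (R : realType) (X : Type) (d : X -> X -> R) (S : set X) (C D K L : R).
Variable x0 : X.
Hypotheses (d_metric : is_metric d) (S_dense : dense_in d S)
  (C_ge1 : 1 <= C) (D_ge0 : 0 <= D)
  (Delta_c_le : forall r : R, 0 <= r -> (Delta_c d r <= (C * r + D)%:E)%E)
  (K_gt : 2 * C < K) (D_le_L : D <= L).

Local Notation mu := (mu C K).
Local Notation slack := (slack C K).
Local Notation eps := (eps C K).
Local Notation ratio := (ratio C K).
Local Notation scale := (scale C K).

Let K_gt0 : 0 < K. Proof. by have := C_ge1; have := K_gt; lra. Qed.
Let mu_pos : 0 < mu. Proof. by apply: mu_gt0. Qed.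
Let slack_pos : 0 < slack. Proof. by apply: slack_gt0. Qed.
Let scale_pos n : 0 < scale n. Proof. exact: scale_gt0. Qed.
Let half_scale_ge0 n : 0 <= scale n / 2. Proof. by have := scale_pos n; lra. Qed.

Lemma cover_at_scale n : exists U : set (set X), [/\ point_finite U,
  (((1 + slack) * scale n)%:E <= lebesgue_number d U)%E &
  (diam_family d U < ((C + mu / 2) * scale n + D)%:E)%E].
Proof.
have s0 := scale_pos n.
apply: Delta_c_lt; apply: le_lt_trans (Delta_c_le _) _.
  by rewrite mulr_ge0 ?ltW // addr_gt0.
by rewrite lte_fin ltrD2r slack_lt.
Qed.

Definition scale_cover n := projT1 (cid (cover_at_scale n)).

Lemma scale_coverP n : [/\ point_finite (scale_cover n),
  (((1 + slack) * scale n)%:E <= lebesgue_number d (scale_cover n))%E &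
  (diam_family d (scale_cover n) < ((C + mu / 2) * scale n + D)%:E)%E].
Proof. exact: projT2 (cid (cover_at_scale n)). Qed.

Lemma scale_cover_ball n y :
  exists2 A, scale_cover n A & [set z | d y z <= scale n / 2] `<=` A.
Proof.
have [_ lebU _] := scale_coverP n; have s0 := scale_pos n; have sl0 := slack_pos.
apply: lebesgue_number_sub lebU _.
apply: le_lt_trans (diam_closed_ball d_metric y (half_scale_ge0 n)) _.
by rewrite lte_fin mulrDl mul1r; have := mulr_gt0 sl0 s0; lra.
Qed.

(* The first factor is at most [scale n / 2] and the second vanishes once
   [eps * scale n >= d x x0]: at each x only a window of scales contributes. *)
Definition bump (j : int * set X) (x : X) : R :=
  K * Num.min (trunc_compl_dist d (scale j.1 / 2) j.2 x)
              (Num.max 0 (d x x0 - eps * scale j.1)).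

Lemma bump_ge0 j x : 0 <= bump j x.
Proof.
rewrite mulr_ge0 ?(ltW K_gt0) // le_min le_max lexx orTb andbT.
exact: trunc_compl_dist_ge0.
Qed.

Lemma bump_le j x : bump j x <= K * (scale j.1 / 2).
Proof.
rewrite ler_pM2l ?K_gt0 // ge_min; apply/orP; left.
exact: trunc_compl_dist_le.
Qed.

Lemma bump_lipschitz j x y : bump j x <= bump j y + K * d x y.
Proof.
rewrite -mulrDr ler_pM2l ?K_gt0 //; apply: le_minD.
  exact: trunc_compl_dist_lipschitz.
apply: le_max0D; first exact: d_ge0.
by have := d_triangle d_metric x y x0; lra.
Qed.

Lemma bump_gt0 j x : 0 < bump j x -> j.2 x /\ eps * scale j.1 < d x x0.
Proof.
rewrite pmulr_rgt0 ?K_gt0 // lt_min lt_max ltxx /= subr_gt0 => /andP[hx ->].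
by split=> //; exact: trunc_compl_dist_gt0 hx.
Qed.

Lemma finite_bump_gt x e : 0 < e ->
  finite_set [set j | scale_cover j.1 j.2 /\ e < bump j x].
Proof.
move=> e0; pose W := [set n | 2 * e / K < scale n < d x x0 / eps].
apply: (@sub_finite_set _ _
  (\bigcup_(n in W) pair n @` [set A | scale_cover n A /\ A x])).
  move=> [n A] [coverA /= ebump]; have [/= Ax xx0] := bump_gt0 (lt_trans e0 ebump).
  exists n; last by exists A.
  have ebK := lt_le_trans ebump (bump_le _ _); have eps0 : 0 < eps by rewrite divr_gt0.
  by rewrite /W /= ltr_pdivrMr // ltr_pdivlMr // [_ * eps]mulrC xx0 andbT; lra.
apply: bigcup_finite.
  by apply: (finite_scale_window C_ge1 K_gt); rewrite divr_gt0 //; lra.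
by move=> n _; apply: finite_image; have [] := scale_coverP n.
Qed.

Definition index_set := [set j | scale_cover j.1 j.2 /\ j.2 `&` S !=set0].

Lemma bump_separates x y : L < d x y -> d x x0 <= d y x0 ->
  exists j, [/\ index_set j, bump j x = 0 & d x y - L <= bump j y].
Proof.
move=> Lxy xy; have mu0 := mu_pos; have C1 := C_ge1.
have D0 := D_ge0; have DL := D_le_L.
set t := d x y in Lxy *; pose a := (t - L) / (C + mu).
have a0 : 0 < a by rewrite divr_gt0 //; lra.
have [n /andP[a_le le_a]] := scale_window C_ge1 K_gt a0.
have [A coverA ballA] := scale_cover_ball n y; have [_ _ diamU] := scale_coverP n.
set r := scale n in a_le le_a ballA diamU; have r0 : 0 < r := scale_pos n.
have rt : (C + mu / 2) * r <= t - L.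
  have -> : t - L = (C + mu / 2) * (ratio * a).
    by rewrite /ratio /a; field; apply/andP; split; apply/eqP; lra.
  by rewrite ler_pM2l //; lra.
have Ax : ~ A x.
  move=> Ax; have Ay : A y by apply: ballA; rewrite /= dxx //; lra.
  have := le_trans (diam_ge d Ax Ay) (diam_le_diam_family d coverA).
  by move=> /le_lt_trans /(_ diamU); rewrite lte_fin -/t; lra.
exists (n, A); split.
- have r2 : 0 < r / 2 by lra.
  split=> //=; have [s Ss ys] := S_dense y r2.
  by exists s; split=> //; apply: ballA; rewrite /=; lra.
- by rewrite /bump /= trunc_compl_dist_out ?min_l ?mulr0 // le_max lexx.
have ty : t <= 2 * d y x0.
  by have := d_triangle d_metric x x0 y; rewrite (d_sym d_metric x0 y) -/t; lra.
have Cr : r <= C * r by rewrite ler_peMl //; lra.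
rewrite /bump /= (trunc_compl_dist_ball d_metric (half_scale_ge0 n) ballA) -/r.
rewrite min_l; last by rewrite le_max /eps; apply/orP; right; nra.
have -> : K * (r / 2) = (C + mu) * r by rewrite /mu; field.
have -> : t - L = (C + mu) * a by rewrite /a; field; apply/eqP; lra.
by rewrite ler_pM2l //; lra.
Qed.

Section Reindexing.
Variables (I : Type) (iota : int * set X -> I).
Hypothesis iota_inj : {in index_set &, injective iota}.

Definition index_of (i : I) : option (int * set X) :=
  if pselect (exists j, index_set j /\ iota j = i) is left e
  then Some (projT1 (cid e)) else None.

Lemma index_of_iota j : index_set j -> index_of (iota j) = Some j.
Proof.
move=> Jj; rewrite /index_of; case: pselect => [e|]; last by case; exists j.
by case: (cid e) => j' /= [Jj' /iota_inj ->] //; apply: mem_set.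
Qed.

Lemma index_ofP i j : index_of i = Some j -> index_set j /\ iota j = i.
Proof. by rewrite /index_of; case: pselect => // e [<-]; exact: projT2 (cid e). Qed.

Definition embed (x : X) (i : I) : R :=
  if index_of i is Some j then bump j x else 0.

Lemma embed_c0plus x : c0plus (embed x).
Proof.
split=> [i|e e0]; first by rewrite /embed; case: index_of => // j; exact: bump_ge0.
apply: sub_finite_set (finite_image iota (finite_bump_gt x e0)).
move=> i /=; rewrite /embed; case E: index_of => [j|]; last first.
  by rewrite normr0 => /(lt_trans e0); rewrite ltxx.
have [[coverj _] <-] := index_ofP E.
by rewrite ger0_norm ?bump_ge0 // => ej; exists j.
Qed.

Lemma embed_le x y : (supnorm (embed x - embed y)%R <= (K * d x y)%:E)%E.
Proof.
have Kdxy : 0 <= K * d x y by rewrite mulr_ge0 ?(ltW K_gt0) ?d_ge0.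
apply: supnorm_le => // i; rewrite !fctE /embed.
case: index_of => [j|]; last by rewrite subrr normr0.
rewrite ler_norml; have := bump_lipschitz j x y; have := bump_lipschitz j y x.
by rewrite (d_sym d_metric y x) => *; apply/andP; split; lra.
Qed.

Lemma embed_ge x y : ((d x y - L)%:E <= supnorm (embed x - embed y)%R)%E.
Proof.
have [dxy|Lxy] := leP (d x y) L.
  by apply: le_trans (supnorm_ge0 _); rewrite lee_fin subr_le0.
wlog xy : x y Lxy / d x x0 <= d y x0.
  move=> gen; have [xy|/ltW yx] := leP (d x x0) (d y x0); first exact: gen Lxy xy.
  by rewrite supnormB (d_sym d_metric x y); apply: gen; rewrite // (d_sym d_metric y x).
have [j [Jj jx jy]] := bump_separates Lxy xy.
apply: le_trans (le_supnorm _ (iota j)).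
by rewrite !fctE /embed index_of_iota // jx sub0r normrN ger0_norm ?bump_ge0 // lee_fin.
Qed.
End Reindexing.

Lemma infinite_dense_embedding (I : Type) : infinite_set S -> S #<= [set: I] ->
  exists f : X -> I -> R, (forall x, c0plus (f x)) /\
    forall x y, ((d x y - L)%:E <= supnorm (f x - f y)%R)%E /\
                (supnorm (f x - f y)%R <= (K * d x y)%:E)%E.
Proof.
move=> Sinf SI; have [iota iota_inj] : exists iota : int * set X -> I,
    {in index_set &, injective iota}.
  by apply: point_finite_index SI => // n; have [] := scale_coverP n.
exists (embed iota); split=> [x|x y]; first exact: embed_c0plus.
by split; [exact: embed_ge | exact: embed_le].
Qed.
End Embedding.

Lemma c0plus_embedding (R : realType) (X : Type) (d : X -> X -> R) (I : Type)
    (C D K L : R) :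
  is_metric d -> has_density_character d I -> 1 <= C -> 0 <= D ->
  (forall r : R, 0 <= r -> (Delta_c d r <= (C * r + D)%:E)%E) ->
  2 * C < K -> D <= L ->
  exists f : X -> I -> R, (forall x, c0plus (f x)) /\
    forall x y, ((d x y - L)%:E <= supnorm (f x - f y)%R)%E /\
                (supnorm (f x - f y)%R <= (K * d x y)%:E)%E.
Proof.
move=> dm [[S [Sdense IS]] _] C1 D0 HD KC DL.
have [[s0 Ss0]|S0] := pselect (S !=set0); last first.
  exists (fun _ _ => 0); split=> x;
    by have [s Ss _] := Sdense x 1 ltr01; case: S0; exists s.
have [Sfin|Sinf] := pselect (finite_set S); last first.
  apply: (infinite_dense_embedding s0 dm Sdense C1 D0 HD KC DL Sinf).
  by move: IS; rewrite card_eq_le => /andP[].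
have [phi phiS] := card_eq_surj (ex_intro _ s0 Ss0) IS.
have Ifin : finite_set [set: I] by rewrite (eq_finite_set IS).
have phi_dense : dense_in d (range phi) by rewrite phiS.
have [f [fc0 fd]] := finite_frechet_embedding dm Ifin phi_dense.
exists f; split=> [//|x y]; rewrite fd !lee_fin; have := d_ge0 dm x y.
by split; [lra | rewrite ler_peMl //; lra].
Qed.

Unset Implicit Arguments.
Local Open Scope ereal_scope.

Theorem mainTheorem1 (R : realType) (X : Type) (d : X -> X -> R) (I : Type)
  (C D : R) :
  is_metric d ->
  has_density_character d I ->
  (1 <= C)%R -> (0 <= D)%R ->
  (forall r : R, (0 <= r)%R -> Delta_c d r <= (C * r + D)%:E) ->
  (forall lam K L : R, (0 < lam)%R -> (2 * (C + lam) < K)%R ->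
     ((C + lam) * D / lam < L)%R ->
     exists f : X -> I -> R,
       (forall x, c0plus (f x)) /\ coarse_lipschitz_embedding d f /\
       forall x y, (d x y - L)%:E <= supnorm (f x - f y)%R /\
                   supnorm (f x - f y)%R <= (K * d x y)%:E) /\
  (D = 0%R -> forall lam K : R, (0 < lam)%R -> (2 * (C + lam) < K)%R ->
     exists f : X -> I -> R,
       (forall x, c0plus (f x)) /\ coarse_lipschitz_embedding d f /\
       forall x y, (d x y)%:E <= supnorm (f x - f y)%R /\
                   supnorm (f x - f y)%R <= (K * d x y)%:E).
Proof.
move=> dm dI C1 D0 HD; split=> [lam K L lam0 KC LD | D00 lam K lam0 KC].
  have KC' : (2 * C < K)%R by lra.
  have DL : (D <= L)%R.
    by apply: le_trans (ltW LD); rewrite ler_pdivlMr // mulrC ler_wpM2r //; lra.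
  have [f [fc0 fb]] := c0plus_embedding dm dI C1 D0 HD KC' DL.
  exists f; split=> //; split=> //.
  by apply: coarse_lipschitz_embedding_of_bounds fb; lra.
have KC' : (2 * C < K)%R by lra.
have D_le0 : (D <= 0)%R by rewrite D00.
have [f [fc0 fb]] := c0plus_embedding dm dI C1 D0 HD KC' D_le0.
exists f; split=> //; split=> [|x y].
  by apply: coarse_lipschitz_embedding_of_bounds fb; lra.
by have := fb x y; rewrite subr0.
Qed.
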